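(* Let $X$ be a non-empty finite set and $\mathcal{P}$ a partition of $X$ with distinct block sizes $l_1<\cdots<l_r$. Then $\Sigma(X,\mathcal{P})$ is generated as a semigroup by $S(X,\mathcal{P})\cup\mathcal{B}\cup\mathcal{C}$.
   Context: $T(X,\mathcal{P})$ is the semigroup (under composition) of maps $f:X\to X$ mapping each block of $\mathcal{P}$ into some block; $S(X,\mathcal{P})$ is its group of units; $\Sigma(X,\mathcal{P})$ is the set of $f\in T(X,\mathcal{P})$ whose image intersects every block. For $i\le r-1$, $\mathcal{B}_i$ is the set of $f\in\Sigma(X,\mathcal{P})$ for which there are blocks $P_j,P_{j'},P_k,P_{k'}$ (possibly $j=j'$ or $k=k'$) with $|P_j|=|P_{j'}|=l_i$, $|P_k|=|P_{k'}|=l_{i+1}$, such that $f$ maps $P_j$ injectively into $P_k$, maps $P_{k'}$ onto $P_{j'}$, and maps every other block bijectively onto a block of the same size; $\mathcal{B}=\bigcup_{i=1}^{r-1}\mathcal{B}_i$. For $i\le r$, $\mathcal{C}_i$ is the set of $f\in\Sigma(X,\mathcal{P})$ mapping each block into a block of the same size, such that one block of size $l_i$ has image of size $l_i-1$ and all other blocks are mapped injectively; $\mathcal{C}=\bigcup_{i=1}^r\mathcal{C}_i$. *)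

From mathcomp Require Import all_boot.
Set Implicit Arguments. Unset Strict Implicit. Unset Printing Implicit Defensive.

Section Defs.
Variable X : finType.
Implicit Types (P : {set {set X}}) (f g : {ffun X -> X}).

Definition compf f g : {ffun X -> X} := [ffun x => f (g x)].
Definition idf : {ffun X -> X} := [ffun x => x].

Definition inT P f : Prop :=
  forall B : {set X}, B \in P -> exists2 C : {set X}, C \in P & f @: B \subset C.

Definition inS P f : Prop :=
  inT P f /\ exists g, [/\ inT P g, compf g f = idf & compf f g = idf].

Definition inSigma P f : Prop :=
  inT P f /\ forall B : {set X}, B \in P -> exists x, f x \in B.

(* the distinct block sizes l_1 < ... < l_r, as a 0-indexed increasing list *)
Definition block_sizes P : seq nat := sort leq (undup [seq #|(B : {set X})| | B in P]).
Definition nsizes P : nat := size (block_sizes P).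
Definition lsize P (i : nat) : nat := nth 0 (block_sizes P) i.  (* l_(i+1) *)

Definition bij_onto_block P f (Q : {set X}) : Prop :=
  exists2 Q' : {set X}, Q' \in P & [/\ #|Q'| = #|Q|, f @: Q = Q' & {in Q &, injective f}].

(* B_i (0-indexed: sizes lsize i and lsize i.+1, i.+1 < r) *)
Definition inBi P (i : nat) f : Prop :=
  inSigma P f /\
  exists Pj Pj' Pk Pk' : {set X},
    [/\ [/\ Pj \in P, Pj' \in P, Pk \in P & Pk' \in P],
        [/\ #|Pj| = lsize P i, #|Pj'| = lsize P i,
            #|Pk| = lsize P i.+1 & #|Pk'| = lsize P i.+1],
        {in Pj &, injective f} /\ f @: Pj \subset Pk,
        f @: Pk' = Pj' &
        forall Q : {set X}, Q \in P -> Q != Pj -> Q != Pk' -> bij_onto_block P f Q].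

Definition inB P f : Prop := exists2 i, i.+1 < nsizes P & inBi P i f.

(* C_i (0-indexed: size lsize i, i < r) *)
Definition inCi P (i : nat) f : Prop :=
  inSigma P f /\
  (forall Q : {set X}, Q \in P -> exists2 Q' : {set X}, Q' \in P & #|Q'| = #|Q| /\ f @: Q \subset Q') /\
  exists2 Q : {set X}, Q \in P &
    [/\ #|Q| = lsize P i, #|f @: Q| = (lsize P i).-1 &
        forall Q' : {set X}, Q' \in P -> Q' != Q -> {in Q' &, injective f}].

Definition inC P f : Prop := exists2 i, i < nsizes P & inCi P i f.

Definition gens P f : Prop := inS P f \/ inB P f \/ inC P f.

Definition in_generated_semigroup (A : {ffun X -> X} -> Prop) f : Prop :=
  exists s : seq {ffun X -> X},
    [/\ s != [::], (forall g, g \in s -> A g) & f = foldr compf idf s].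

End Defs.

From mathcomp Require Import all_boot zify.
Set Implicit Arguments. Unset Strict Implicit. Unset Printing Implicit Defensive.

(* Every f in Sigma(X,P) induces a permutation of the blocks, so Sigma is a
   monoid containing the generators.  Conversely, argue by induction on the
   weight sum_x |block of f x| and then on |f X|.  An injective f is a unit.
   If some block is sent into a larger block, choose such a block D whose
   target K has minimal size, l_(i+1); counting along the block permutation
   gives a block E larger than D sent onto a block J of size l_i.  A map b in B_i exchanging J and K
   is an involution on the image of f, so f = b (b f) and b f has larger
   weight.  Otherwise no block grows; a point z missed by f lies in the target
   of a block on which f is not injective, say f x = f y with x <> y, and
   f = f' c with c in C collapsing y onto x and f' = f redirected at y to z:
   f' has the same weight and a larger image. *)

Section Composition.
Variable T : finType.
Implicit Types (f g : {ffun T -> T}) (A Q : {ffun T -> T} -> Prop).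

Lemma compfE f g x : compf f g x = f (g x).
Proof. by rewrite ffunE. Qed.

Lemma idfE x : idf T x = x.
Proof. by rewrite ffunE. Qed.

Lemma foldr_compf_cat s t :
  foldr (@compf T) (idf T) (s ++ t) =
  compf (foldr (@compf T) (idf T) s) (foldr (@compf T) (idf T) t).
Proof.
elim: s => [|g s IHs] /=; first by apply/ffunP => x; rewrite compfE idfE.
by rewrite IHs; apply/ffunP => x; rewrite !compfE.
Qed.

Lemma generated_semigroup_gen A f : A f -> in_generated_semigroup A f.
Proof.
move=> Af; exists [:: f]; split=> // [g|]; first by rewrite inE => /eqP ->.
by apply/ffunP => x; rewrite compfE idfE.
Qed.

Lemma generated_semigroup_comp A f g :
  in_generated_semigroup A f -> in_generated_semigroup A g ->
  in_generated_semigroup A (compf f g).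
Proof.
move=> [s [s0 As ->]] [t [_ At ->]]; exists (s ++ t); split.
- by case: s {As} s0.
- by move=> h; rewrite mem_cat => /orP[/As|/At].
- by rewrite foldr_compf_cat.
Qed.

Lemma generated_semigroup_ind A Q :
  Q (idf T) -> (forall f g, Q f -> Q g -> Q (compf f g)) -> (forall f, A f -> Q f) ->
  forall f, in_generated_semigroup A f -> Q f.
Proof.
move=> Qid Qcomp AQ _ [s [_ As ->]].
elim: s As => //= g s IHs As; apply: Qcomp; first by apply/AQ/As; rewrite mem_head.
by apply: IHs => h hs; apply: As; rewrite in_cons hs orbT.
Qed.

End Composition.

Lemma subset_extend_card (T : finType) (A C : {set T}) n :
  A \subset C -> #|A| <= n -> n <= #|C| ->
  exists2 B : {set T}, A \subset B & B \subset C /\ #|B| = n.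
Proof.
move=> sAC; elim: n => [|n IHn] leAn leCn.
  by exists A => //; split=> //; apply/eqP; rewrite -leqn0.
case: (ltngtP #|A| n.+1) leAn => // [ltAn _|<- _]; last by exists A.
have [B sAB [sBC cardB]] := IHn ltAn (ltnW leCn).
have /properP[_ [z zC zB]] : B \proper C by rewrite properEcard sBC cardB.
exists (z |: B); first exact: subset_trans sAB (subsetUr _ _).
by split; [rewrite subUset sub1set zC | rewrite cardsU1 zB cardB].
Qed.

Lemma exists_card_bijection (T : finType) (A B : {set T}) :
  #|A| = #|B| -> exists h g : T -> T,
    (forall x, x \in A -> h x \in B /\ g (h x) = x) /\
    (forall y, y \in B -> g y \in A /\ h (g y) = y).
Proof.
move=> cardAB; have sizeAB : size (enum A) = size (enum B) by rewrite -!cardE.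
exists (fun x => nth x (enum B) (index x (enum A))),
       (fun y => nth y (enum A) (index y (enum B))).
split.
- move=> x xA.
  have ltx : index x (enum A) < size (enum B) by rewrite -sizeAB index_mem mem_enum.
  by rewrite -mem_enum mem_nth // index_uniq ?enum_uniq // nth_index ?mem_enum.
- move=> y yB.
  have lty : index y (enum B) < size (enum A) by rewrite sizeAB index_mem mem_enum.
  by rewrite -mem_enum mem_nth // index_uniq ?enum_uniq // nth_index ?mem_enum.
Qed.

Definition swaps_blocks (T : finType) (J K : {set T}) (b : {ffun T -> T}) :=
  [/\ b @: J \subset K, b @: K = J & forall z, z \notin J -> z \notin K -> b z = z].

Lemma exists_swap_map (T : finType) (J K A : {set T}) :
  [disjoint J & K] -> 0 < #|J| -> A \subset K -> #|A| <= #|J| <= #|K| ->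
  exists b : {ffun T -> T}, [/\ swaps_blocks J K b, {in J &, injective b} &
                              forall z, z \notin K :\: A -> b (b z) = z].
Proof.
move=> dJK /card_gt0P[w0 w0J] sAK /andP[leAJ leJK].
have [A' sAA' [sA'K cardA']] := subset_extend_card sAK leAJ leJK.
have [h [g [hJ gA']]] := exists_card_bijection (esym cardA').
have notJ z : z \in K -> z \notin J by move=> zK; rewrite (disjointFl dJK zK).
pose b := [ffun z => if z \in J then h z else if z \in A' then g z
                     else if z \in K then w0 else z].
have bJ z : z \in J -> b z = h z by move=> zJ; rewrite ffunE zJ.
have bA' z : z \in A' -> b z = g z.
  by move=> zA; rewrite ffunE (negbTE (notJ _ (subsetP sA'K _ zA))) zA.
exists b; split; first split.
- by apply/subsetP => _ /imsetP[z zJ ->]; rewrite bJ //; apply/(subsetP sA'K)/(hJ z zJ).1.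
- apply/setP => w; apply/imsetP/idP => [[z zK ->]|wJ].
    rewrite ffunE (negbTE (notJ z zK)) zK; case: ifP => [zA|//].
    exact: (gA' z zA).1.
  have [hwA ghw] := hJ w wJ; exists (h w); first exact: subsetP sA'K _ hwA.
  by rewrite bA'.
- move=> z zJ zK; rewrite ffunE (negbTE zJ) (negbTE zK).
  by case: ifP => // /(subsetP sA'K); rewrite (negbTE zK).
- by move=> x y xJ yJ; rewrite !bJ // => hxy; rewrite -(hJ x xJ).2 hxy (hJ y yJ).2.
- move=> z; rewrite inE negb_and negbK => zKA.
  case: (boolP (z \in J)) => [zJ|zJ]; first by have [hzA ghz] := hJ z zJ; rewrite (bJ z zJ) bA'.
  case: (boolP (z \in A')) => [zA|zA]; first by have [gzJ hgz] := gA' z zA; rewrite (bA' z zA) bJ.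
  have zK : z \notin K by case/orP: zKA => // /(subsetP sAA'); rewrite (negbTE zA).
  have bz : b z = z by rewrite ffunE (negbTE zJ) (negbTE zA) (negbTE zK).
  by rewrite !bz.
Qed.

Lemma sum_preimset_mul (aT rT : finType) (f : aT -> rT) (C : {set rT}) n :
  \sum_x (f x \in C) * n = #|f @^-1: C| * n.
Proof.
rewrite -sum_nat_const [RHS]big_mkcond; apply: eq_bigr => x _.
by rewrite inE; case: (f x \in C); rewrite ?mul1n ?mul0n.
Qed.

Section BlockSizes.
Variables (X : finType) (P : {set {set X}}).

Lemma block_sizesP n : reflect (exists2 B, B \in P & #|B| = n) (n \in block_sizes P).
Proof.
rewrite /block_sizes mem_sort mem_undup.
by apply: (iffP imageP) => [[B PB ->]|[B PB <-]]; exists B.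
Qed.

Lemma block_size_mem B : B \in P -> #|B| \in block_sizes P.
Proof. by move=> PB; apply/block_sizesP; exists B. Qed.

Lemma lsize_index n : n \in block_sizes P -> exists2 i, i < nsizes P & lsize P i = n.
Proof.
move=> sizes_n; exists (index n (block_sizes P)).
  by rewrite /nsizes index_mem.
by rewrite /lsize nth_index.
Qed.

Lemma lsize_ltn i j : i < j -> j < nsizes P -> lsize P i < lsize P j.
Proof.
have sorted_sizes : sorted ltn (block_sizes P).
  by rewrite ltn_sorted_uniq_leq sort_uniq undup_uniq sort_sorted //; apply: leq_total.
move=> lt_ij lt_j; apply: (sorted_ltn_nth ltn_trans 0 sorted_sizes) => //.
by rewrite inE (ltn_trans lt_ij).
Qed.

Lemma lsize_leq i j : i <= j -> j < nsizes P -> lsize P i <= lsize P j.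
Proof. by rewrite leq_eqVlt => /orP[/eqP -> //|lt_ij /(lsize_ltn lt_ij)/ltnW]. Qed.

Lemma lsize_pred u s : u \in block_sizes P -> s \in block_sizes P -> u < s ->
  exists2 i, i.+1 < nsizes P & lsize P i.+1 = s /\ u <= lsize P i.
Proof.
move=> /lsize_index[j lt_j <-] /lsize_index[k lt_k <-] lt_ljk.
have : j < k by rewrite ltnNge; apply: contraL lt_ljk => le_kj; rewrite -leqNgt lsize_leq.
case: k lt_k {lt_ljk} => // i lt_i lt_ji; exists i => //; split=> //.
by apply: lsize_leq (ltn_trans (ltnSn i) lt_i).
Qed.

End BlockSizes.

Section PartitionMaps.
Variables (X : finType) (P : {set {set X}}).
Hypothesis partP : partition P [set: X].
Implicit Types (f g b : {ffun X -> X}) (B C J K : {set X}).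

Lemma pblock_in x : pblock P x \in P.
Proof. by case/and3P: partP => /eqP coverP _ _; rewrite pblock_mem // coverP. Qed.

Lemma pblock_self x : x \in pblock P x.
Proof. by case/and3P: partP => /eqP coverP _ _; rewrite mem_pblock coverP. Qed.

Lemma pblock_eq C x : C \in P -> x \in C -> pblock P x = C.
Proof. by case/and3P: partP => _ tiP _; apply: def_pblock. Qed.

Lemma mem_blockE C x : C \in P -> (x \in C) = (pblock P x == C).
Proof. by move=> PC; apply/idP/eqP => [|<-]; [apply: pblock_eq | apply: pblock_self]. Qed.

Lemma block_nonempty C : C \in P -> exists x, x \in C.
Proof.
case/and3P: partP => _ _ P0 PC; have [C0|[x xC]] := set_0Vmem C; last by exists x.
by rewrite -C0 PC in P0.
Qed.

Lemma blocks_disjoint J K : J \in P -> K \in P -> J != K -> [disjoint J & K].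
Proof. by case/and3P: partP => _ /trivIsetP disjP _; apply: disjP. Qed.

Definition block_preserving f :=
  forall x y, pblock P x = pblock P y -> pblock P (f x) = pblock P (f y).

Definition block_surjective f := forall y, exists x, pblock P (f x) = pblock P y.

Lemma inTP f : inT P f <-> block_preserving f.
Proof.
split=> [Tf x y xy|pres_f B PB].
  have [C PC /subsetP fBC] := Tf _ (pblock_in x).
  have fxC : f x \in C by apply/fBC/imset_f/pblock_self.
  have fyC : f y \in C by apply/fBC/imset_f; rewrite xy pblock_self.
  by rewrite (pblock_eq PC fxC) (pblock_eq PC fyC).
have [x xB] := block_nonempty PB; exists (pblock P (f x)); first exact: pblock_in.
apply/subsetP => _ /imsetP[z zB ->]; rewrite (pres_f x z) ?pblock_self //.
by rewrite (pblock_eq PB zB) (pblock_eq PB xB).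
Qed.

Lemma inSigmaP f : inSigma P f <-> block_preserving f /\ block_surjective f.
Proof.
rewrite /inSigma inTP; split=> -[pres_f surj_f]; split=> //.
  move=> y; have [x fxy] := surj_f _ (pblock_in y).
  by exists x; apply: pblock_eq (pblock_in y) fxy.
move=> B PB; have [y yB] := block_nonempty PB; have [x fxy] := surj_f y.
by exists x; rewrite (mem_blockE _ PB) fxy (pblock_eq PB yB).
Qed.

Lemma sigma_idf : inSigma P (idf X).
Proof. by apply/inSigmaP; split=> [x y|y]; [rewrite !idfE | exists y; rewrite idfE]. Qed.

Lemma sigma_compf f g : inSigma P f -> inSigma P g -> inSigma P (compf f g).
Proof.
move=> /inSigmaP[pres_f surj_f] /inSigmaP[pres_g surj_g]; apply/inSigmaP.
split=> [x y xy|y]; first by rewrite !compfE; apply/pres_f/pres_g.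
have [x1 fx1] := surj_f y; have [x gx] := surj_g x1.
by exists x; rewrite compfE -fx1; apply: pres_f.
Qed.

Lemma sigma_of_gens f : gens P f -> inSigma P f.
Proof.
case=> [[Tf [g [_ gf fg]]]|[[i _ [] //]|[i _ [] //]]]; split=> // B PB.
have [y yB] := block_nonempty PB.
by exists (g y); rewrite -compfE fg idfE.
Qed.

Definition block_image f B := odflt set0 [pick C in P | f @: B \subset C].

Lemma block_imageE f B x : inSigma P f -> B \in P -> x \in B ->
  block_image f B = pblock P (f x).
Proof.
move=> [Tf _] PB xB; rewrite /block_image; case: pickP => [C /andP[PC /subsetP fBC]|noC] /=.
  by rewrite (pblock_eq PC (fBC _ (imset_f f xB))).
by have [C PC fBC] := Tf _ PB; move: (noC C); rewrite PC fBC.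
Qed.

Lemma block_image_onto f C : inSigma P f -> C \in P ->
  exists2 B, B \in P & block_image f B = C.
Proof.
move=> sf PC; have [_ surj_f] := (inSigmaP f).1 sf.
have [y yC] := block_nonempty PC; have [x fxy] := surj_f y.
exists (pblock P x); first exact: pblock_in.
by rewrite (block_imageE sf (pblock_in x) (pblock_self x)) fxy (pblock_eq PC yC).
Qed.

Lemma block_image_inj f : inSigma P f -> {in P &, injective (block_image f)}.
Proof.
move=> sf; apply/imset_injP; rewrite eqn_leq leq_imset_card subset_leq_card //.
by apply/subsetP => C /(block_image_onto sf)[B PB <-]; apply: imset_f.
Qed.

Lemma sigma_pblock_inj f x y : inSigma P f ->
  pblock P (f x) = pblock P (f y) -> pblock P x = pblock P y.
Proof.
move=> sf fxy; apply: (block_image_inj sf); try exact: pblock_in.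
by rewrite !(block_imageE sf (pblock_in _) (pblock_self _)).
Qed.

Lemma preimset_pblock f x : inSigma P f -> f @^-1: pblock P (f x) = pblock P x.
Proof.
move=> sf; apply/setP => y; rewrite inE !(mem_blockE _ (pblock_in _)).
have [pres_f _] := (inSigmaP f).1 sf.
by apply/eqP/eqP => [/(sigma_pblock_inj sf)|/pres_f].
Qed.

Lemma card_block_preimage f (L : {set {set X}}) : inSigma P f -> L \subset P ->
  #|[set B in P | block_image f B \in L]| = #|L|.
Proof.
move=> sf /subsetP LP; set T := [set B in P | _].
have -> : L = block_image f @: T.
  apply/setP => C; apply/idP/imsetP => [LC|[B]]; last by rewrite inE => /andP[_ ?] ->.
  by have [B PB BC] := block_image_onto sf (LP C LC); exists B; rewrite // inE PB BC.
rewrite card_in_imset //; apply: sub_in2 (block_image_inj sf) => B.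
by rewrite inE => /andP[].
Qed.

Lemma inS_of_injective f : inSigma P f -> injective f -> inS P f.
Proof.
move=> sf inj_f; split; first by case: sf.
exists [ffun y => invF inj_f y]; split.
- apply/inTP => x y xy; apply: (sigma_pblock_inj sf); by rewrite !ffunE !f_invF.
- by apply/ffunP => x; rewrite compfE !ffunE invF_f.
- by apply/ffunP => x; rewrite compfE !ffunE f_invF.
Qed.

Definition weight f := \sum_x #|pblock P (f x)|.

Lemma weight_le f : weight f <= #|X| * #|X|.
Proof. by rewrite -sum_nat_const; apply: leq_sum => x _; apply: max_card. Qed.

Definition collapse x y : {ffun X -> X} := [ffun w => if w == y then x else w].

Definition redirect f y z : {ffun X -> X} := [ffun w => if w == y then z else f w].

Lemma collapse_in_C x y : x != y -> pblock P x = pblock P y -> inC P (collapse x y).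
Proof.
move=> xy Bxy; set c := collapse x y; set B := pblock P y in Bxy *.
have Bc w : pblock P (c w) = pblock P w by rewrite ffunE; case: eqP => [->|].
have [i lt_i iB] := lsize_index (block_size_mem (pblock_in y)).
exists i => //; split; last split.
- by apply/inSigmaP; split=> [u v uv|v]; [rewrite !Bc | exists v; rewrite Bc].
- move=> Q PQ; exists Q => //; split=> //; apply/subsetP => _ /imsetP[w wQ ->].
  by rewrite (mem_blockE _ PQ) Bc -(mem_blockE _ PQ).
- exists B; first exact: pblock_in.
  have -> : c @: B = B :\ y.
    apply/setP => w; rewrite !inE; apply/imsetP/andP => [[v vB ->]|[wy wB]].
      by rewrite ffunE; case: ifP => [_|/negbT vy] //; split; rewrite // -Bxy pblock_self.
    by exists w; rewrite // ffunE (negbTE wy).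
  rewrite iB; split=> //; first by rewrite (cardsD1 y B) pblock_self.
  move=> Q PQ QB u v uQ vQ; rewrite !ffunE.
  have notY w : w \in Q -> (w == y) = false.
    by move=> wQ; apply: contraNF QB => /eqP wy; rewrite -(pblock_eq PQ wQ) wy.
  by rewrite (notY u uQ) (notY v vQ).
Qed.

Lemma exists_collision f :
  inSigma P f -> #|f @: [set: X]| < #|X| -> (forall x, #|pblock P (f x)| <= #|pblock P x|) ->
  exists x y z, [/\ x != y, pblock P x = pblock P y, f x = f y,
                   z \notin f @: [set: X] & pblock P z = pblock P (f y)].
Proof.
move=> sf small shrink; have [pres_f surj_f] := (inSigmaP f).1 sf.
have /subsetPn[z _ zf] : ~~ ([set: X] \subset f @: [set: X]).
  by apply: contraTN small => /subset_leq_card; rewrite cardsT -leqNgt.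
have [x1 fx1] := surj_f z; set B := pblock P x1.
have fB w : w \in B -> pblock P (f w) = pblock P z.
  by move=> wB; rewrite -fx1; apply: pres_f; rewrite (pblock_eq (pblock_in x1) wB).
have lt_fB : #|f @: B| < #|B|.
  apply: leq_trans (shrink x1); rewrite fx1 (cardsD1 z (pblock P z)) pblock_self ltnS.
  apply: subset_leq_card.
  apply/subsetP => _ /imsetP[w wB ->]; rewrite !inE (mem_blockE _ (pblock_in z)) fB // eqxx.
  by rewrite andbT; apply: contraNneq zf => <-; apply: imset_f.
have /exists_inP[x xB /exists_inP[y yB /andP[xy /eqP fxy]]] :
    [exists x in B, exists y in B, (x != y) && (f x == f y)].
  apply: contraTT lt_fB => /exists_inPn noColl; rewrite -leqNgt.
  suff /imset_injP/eqP -> : {in B &, injective f} by [].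
  move=> u v uB vB fuv; apply/eqP; apply: contraNT (noColl u uB) => uv.
  by apply/exists_inP; exists v; rewrite // uv fuv eqxx.
exists x, y, z; split; rewrite ?fB //.
by rewrite (pblock_eq (pblock_in x1) xB) (pblock_eq (pblock_in x1) yB).
Qed.

Lemma factor_through_C f :
  inSigma P f -> #|f @: [set: X]| < #|X| -> (forall x, #|pblock P (f x)| <= #|pblock P x|) ->
  exists f' c, [/\ inSigma P f', inC P c, f = compf f' c, weight f' = weight f &
                  #|f @: [set: X]| < #|f' @: [set: X]|].
Proof.
move=> sf small shrink; have [x [y [z [xy Bxy fxy zf Bz]]]] := exists_collision sf small shrink.
have Bf' w : pblock P (redirect f y z w) = pblock P (f w).
  by rewrite ffunE; case: eqP => [->|].
have [pres_f surj_f] := (inSigmaP f).1 sf.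
exists (redirect f y z), (collapse x y); split.
- apply/inSigmaP; split=> [u v uv|v]; first by rewrite !Bf'; apply: pres_f.
  by have [u fu] := surj_f v; exists u; rewrite Bf'.
- exact: collapse_in_C.
- apply/ffunP => w; rewrite compfE !ffunE.
  by case: (eqVneq w y) => [->|wy]; rewrite ?eqxx ?(negbTE xy) ?(negbTE wy) ?fxy.
- by apply: eq_bigr => w _; rewrite Bf'.
- apply: proper_card; apply/properP; split.
    apply/subsetP => _ /imsetP[w _ ->]; apply/imsetP.
    case: (eqVneq w y) => [->|wy]; first by exists x; rewrite ?inE // ffunE (negbTE xy).
    by exists w; rewrite ?inE // ffunE (negbTE wy).
  by exists z => //; apply/imsetP; exists y; rewrite ?inE // ffunE eqxx.
Qed.

Lemma pblock_swap J K b z : J \in P -> K \in P -> swaps_blocks J K b ->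
  pblock P (b z) = if z \in J then K else if z \in K then J else pblock P z.
Proof.
move=> PJ PK [/subsetP bJK bKJ bid].
case: ifP => [zJ|zJ]; first exact/(pblock_eq PK)/bJK/imset_f.
case: ifP => [zK|zK]; last by rewrite bid ?zJ ?zK.
by apply: pblock_eq PJ _; rewrite -bKJ imset_f.
Qed.

Lemma sigma_swap J K b : J \in P -> K \in P -> swaps_blocks J K b -> inSigma P b.
Proof.
move=> PJ PK swJK; have [/subsetP bJK bKJ bid] := swJK; apply/inSigmaP; split.
  move=> x y xy; rewrite !(pblock_swap _ PJ PK swJK).
  by rewrite !(mem_blockE _ PJ) !(mem_blockE _ PK) xy.
move=> y; case: (boolP (y \in J)) => [yJ|yJ].
  by move: yJ; rewrite -bKJ => /imsetP[x _ ->]; exists x.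
case: (boolP (y \in K)) => [yK|yK]; last by exists y; rewrite bid.
have [w wJ] := block_nonempty PJ; exists w.
by rewrite (pblock_eq PK (bJK _ (imset_f b wJ))) (pblock_eq PK yK).
Qed.

Lemma swap_in_B i J K b : J \in P -> K \in P -> swaps_blocks J K b -> {in J &, injective b} ->
  i.+1 < nsizes P -> #|J| = lsize P i -> #|K| = lsize P i.+1 -> inB P b.
Proof.
move=> PJ PK swJK inj_b lt_i Ji Ki; have [bJK bKJ bid] := swJK.
exists i => //; split; first exact: sigma_swap swJK.
exists J, J, K, K; split=> // Q PQ QJ QK.
have bQ z : z \in Q -> b z = z.
  by move=> zQ; apply: bid; rewrite ?(mem_blockE _ PJ) ?(mem_blockE _ PK) (pblock_eq PQ zQ).
exists Q => //; split=> //; first by rewrite (eq_in_imset bQ) imset_id.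
by move=> u v uQ vQ; rewrite (bQ u uQ) (bQ v vQ).
Qed.

Lemma weight_swap f J K b : J \in P -> K \in P -> J != K -> swaps_blocks J K b ->
  weight (compf b f) + #|f @^-1: K| * #|K| + #|f @^-1: J| * #|J| =
  weight f + #|f @^-1: K| * #|J| + #|f @^-1: J| * #|K|.
Proof.
move=> PJ PK JK swJK; rewrite /weight -!sum_preimset_mul -!big_split.
apply: eq_bigr => x _ /=; rewrite compfE (pblock_swap _ PJ PK swJK).
case: (boolP (f x \in J)) => [fxJ|_].
  rewrite (disjointFr (blocks_disjoint PJ PK JK) fxJ) (pblock_eq PJ fxJ) /=; lia.
by case: (boolP (f x \in K)) => [fxK|_] /=; rewrite ?(pblock_eq PK fxK); lia.
Qed.

Lemma exists_minimal_growth f : (exists x, #|pblock P x| < #|pblock P (f x)|) ->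
  exists x0, #|pblock P x0| < #|pblock P (f x0)| /\
    forall x, #|pblock P x| < #|pblock P (f x)| -> #|pblock P (f x0)| <= #|pblock P (f x)|.
Proof.
case=> x grow; pose grows y := #|pblock P y| < #|pblock P (f y)|.
by case: (@arg_minnP _ x grows (fun y => #|pblock P (f y)|) grow) => x0; exists x0.
Qed.

(* The block map of f permutes P.  Without such y0 it would map the blocks of
   size l_i onto themselves, forcing |D| = l_i for D the block of x0, while D
   is mapped onto a block of size l_(i+1). *)
Lemma exists_larger_source f x0 i :
  inSigma P f -> i.+1 < nsizes P ->
  #|pblock P (f x0)| = lsize P i.+1 -> #|pblock P x0| <= lsize P i ->
  (forall x, #|pblock P x| < #|pblock P (f x)| -> lsize P i.+1 <= #|pblock P (f x)|) ->
  exists y0, #|pblock P (f y0)| = lsize P i /\ #|pblock P x0| < #|pblock P y0|.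
Proof.
move=> sf lt_i fx0E x0E minf; set t := lsize P i in x0E *.
have lt_t : t < lsize P i.+1 by apply: lsize_ltn.
case: (boolP [exists y, (#|pblock P (f y)| == t) && (#|pblock P x0| < #|pblock P y|)]).
  by case/existsP => y /andP[/eqP fyE lt_y]; exists y.
move/existsPn => noy; exfalso.
have small y : #|pblock P (f y)| = t -> #|pblock P y| <= #|pblock P x0|.
  by move=> fyE; move: (noy y); rewrite fyE eqxx /= -leqNgt.
have fy_t y : #|pblock P (f y)| = t -> #|pblock P y| = t.
  move=> fyE; apply/eqP; rewrite eqn_leq (leq_trans (small y fyE) x0E) leqNgt.
  by apply/negP => lt_y; have := minf y; rewrite fyE => /(_ lt_y); rewrite leqNgt lt_t.
set L := [set C in P | #|C| == t]; set T := [set B in P | block_image f B \in L].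
have TL : T \subset L.
  apply/subsetP => B; rewrite !inE => /andP[PB /andP[_ /eqP fBt]]; rewrite PB /=.
  have [y yB] := block_nonempty PB; rewrite (block_imageE sf PB yB) in fBt.
  by rewrite -(pblock_eq PB yB) fy_t.
have /eqP TeqL : T == L.
  rewrite eqEcard TL card_block_preimage ?leqnn //.
  by apply/subsetP => C; rewrite inE => /andP[].
have [C PC Ct] : exists2 C, C \in P & #|C| = t by apply/block_sizesP; rewrite mem_nth // ltnW.
have [y yC] := block_nonempty PC.
have : C \in T by rewrite TeqL inE PC Ct eqxx.
rewrite inE PC inE (block_imageE sf PC yC) => /and3P[_ _ /eqP /small].
rewrite (pblock_eq PC yC) Ct => t_x0.
have : pblock P x0 \in T by rewrite TeqL inE pblock_in eqn_leq x0E t_x0.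
rewrite inE (block_imageE sf (pblock_in x0) (pblock_self x0)) inE fx0E => /and3P[_ _].
by rewrite eqn_leq leqNgt lt_t.
Qed.

Lemma factor_through_B f : inSigma P f -> (exists x, #|pblock P x| < #|pblock P (f x)|) ->
  exists b f', [/\ inSigma P f', inB P b, f = compf b f' & weight f < weight f'].
Proof.
move=> sf /exists_minimal_growth[x0 [grow0 minf]].
set D := pblock P x0 in grow0; set K := pblock P (f x0) in grow0 minf.
have [i lt_i [Ki D_le]] :=
  lsize_pred (block_size_mem (pblock_in x0)) (block_size_mem (pblock_in (f x0))) grow0.
rewrite -/D -/K in Ki D_le; rewrite -Ki in minf.
have [y0 [Ji D_lt]] := exists_larger_source sf lt_i (esym Ki) D_le minf.
set J := pblock P (f y0) in Ji; set E := pblock P y0 in D_lt.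
have PJ : J \in P by apply: pblock_in.
have PK : K \in P by apply: pblock_in.
have preK : f @^-1: K = D by apply: preimset_pblock.
have preJ : f @^-1: J = E by apply: preimset_pblock.
have lt_JK : #|J| < #|K| by rewrite Ji -Ki lsize_ltn.
have JK : J != K by apply: contraTneq lt_JK => ->; rewrite ltnn.
have fDK : f @: D \subset K.
  by apply/subsetP => _ /imsetP[x xD ->]; rewrite -preK inE in xD.
have J_gt0 : 0 < #|J| by apply/card_gt0P/block_nonempty.
have fD_JK : #|f @: D| <= #|J| <= #|K|.
  by rewrite (ltnW lt_JK) andbT Ji (leq_trans (leq_imset_card f D)).
have [b [swJK inj_b bb]] := exists_swap_map (blocks_disjoint PJ PK JK) J_gt0 fDK fD_JK.
exists b, (compf b f); split.
- exact: sigma_compf (sigma_swap PJ PK swJK) sf.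
- exact: swap_in_B PJ PK swJK inj_b lt_i Ji (esym Ki).
- apply/ffunP => x; rewrite !compfE bb // inE negb_and negbK.
  case: (boolP (f x \in K)) => fxK; rewrite ?orbT // orbF.
  by apply: imset_f; rewrite -preK inE.
- have := weight_swap f PJ PK JK swJK; rewrite preK preJ.
  move: D_lt lt_JK; rewrite -/D -/E; nia.
Qed.

Lemma generated_of_sigma f : inSigma P f -> in_generated_semigroup (gens P) f.
Proof.
have [n] := ubnP (#|X| * #|X| - weight f); elim: n f => // n IHn f lt_w.
have [m] := ubnP (#|X| - #|f @: [set: X]|); elim: m f lt_w => // m IHm f lt_w lt_im sf.
have [/existsP grow|/existsPn noGrow] := boolP [exists x, #|pblock P x| < #|pblock P (f x)|].
  have [b [f' [sf' Bb ef lt_ww]]] := factor_through_B sf grow.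
  rewrite ef; apply: generated_semigroup_comp.
    by apply: generated_semigroup_gen; right; left.
  by apply: (IHn f') => //; have := weight_le f'; lia.
have shrink x : #|pblock P (f x)| <= #|pblock P x| by rewrite leqNgt noGrow.
have [small|full] := ltnP #|f @: [set: X]| #|X|.
  have [f' [c [sf' Cc ef ww lt_im']]] := factor_through_C sf small shrink.
  rewrite ef; apply: generated_semigroup_comp; last first.
    by apply: generated_semigroup_gen; right; right.
  by apply: (IHm f'); rewrite ?ww //; have := max_card (f' @: [set: X]); lia.
apply/generated_semigroup_gen; left; apply: (inS_of_injective sf).
have /imset_injP inj_f : #|f @: [set: X]| == #|[set: X]|.
  by rewrite cardsT eqn_leq full max_card.
by move=> x y; apply: inj_f; rewrite inE.
Qed.

End PartitionMaps.

Theorem corollary4p5 (X : finType) (P : {set {set X}}) :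
  0 < #|X| -> partition P [set: X] ->
  forall f : {ffun X -> X}, inSigma P f <-> in_generated_semigroup (gens P) f.
Proof.
move=> _ partP f; split; first exact: generated_of_sigma.
apply: generated_semigroup_ind; [exact: sigma_idf | exact: sigma_compf | exact: sigma_of_gens].
Qed.
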